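(* For every integer $r\ge-1$, the generating function $\sum_\pi q^{|\pi|}$ over all partitions $\pi$ with $n$ copies of $n$ (including the empty one) in which, with parts in ascending lexicographic order, the weighted difference between each part and the preceding part is at least $r$, equals $$\sum_{m\ge0}\frac{q^{m^2+r\binom m2}}{(q;q)_m\,(q;q^2)_m}.$$
   Context: $M=\{m_i: 1\le i\le m\}$; a partition with $n$ copies of $n$ is a finite multiset of elements of $M$, $|\pi|$ the sum of values (first entries). Lexicographic order: $m_i>n_j$ iff $m>n$, or $m=n$ and $i>j$. Weighted difference $((m_i-n_j))=m-n-i-j$. $(a;q)_m=\prod_{j=0}^{m-1}(1-aq^j)$. *)

From mathcomp Require Import all_boot all_order all_algebra.
Set Implicit Arguments. Unset Strict Implicit. Unset Printing Implicit Defensive.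
Import Order.TTheory GRing.Theory Num.Theory.
Local Open Scope ring_scope.

(** Formal power series in q with integer coefficients: n |-> coefficient of q^n. *)
Definition fps := nat -> int.

Definition fps_one : fps := fun n => (n == 0%N)%:R.
Definition fps_X (k : nat) : fps := fun n => (n == k)%:R.
Definition fps_sub (f g : fps) : fps := fun n => f n - g n.
Definition fps_mul (f g : fps) : fps :=
  fun n => \sum_(k < n.+1) f k * g (n - k)%N.
Definition fps_prod (s : seq fps) : fps := foldr fps_mul fps_one s.

(** Reciprocal of a series with constant term 1:
    g_0 = 1, g_(n+1) = - sum_(k=1)^(n+1) f_k g_(n+1-k).
    [fps_inv_list f n] is the list [g_0; ...; g_n]. *)
Fixpoint fps_inv_list (f : fps) (n : nat) : seq int :=
  match n with
  | 0%N => [:: 1]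
  | n'.+1 => let s := fps_inv_list f n' in
             rcons s (- \sum_(k < n'.+1) f k.+1 * nth 0 s (n' - k)%N)
  end.
Definition fps_inv (f : fps) : fps := fun n => nth 0 (fps_inv_list f n) n.

(** (q^a ; q^d)_m = prod_(j < m) (1 - q^(a + d j)) *)
Definition qpoch (a d m : nat) : fps :=
  fps_prod [seq fps_sub fps_one (fps_X (a + d * j)) | j <- iota 0 m].

(** exponent m^2 + r * binom(m,2) (nonnegative for r >= -1) *)
Definition expo (r : int) (m : nat) : int := (m ^ 2)%:Z + r * ('C(m, 2))%:Z.

Definition rhs_term (r : int) (m : nat) : fps :=
  fps_mul (fps_X `|expo r m|%N) (fps_inv (fps_mul (qpoch 1 1 m) (qpoch 1 2 m))).

(** Partitions with n copies of n: a part n_i is the pair (n, i), 1 <= i <= n.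
    A partition (finite multiset of parts) is represented by the list of its
    parts in ascending lexicographic order. *)
Definition part_ok (p : nat * nat) : bool := (0 < p.2)%N && (p.2 <= p.1)%N.

Definition lexle (p q : nat * nat) : bool :=
  (p.1 < q.1)%N || ((p.1 == q.1) && (p.2 <= q.2)%N).

Definition wdiff (a b : nat * nat) : int :=
  a.1%:Z - b.1%:Z - a.2%:Z - b.2%:Z.

Definition pweight (s : seq (nat * nat)) : nat := sumn (map fst s).

Definition valid_part (r : int) (s : seq (nat * nat)) : bool :=
  all part_ok s && sorted lexle s && sorted (fun a b => r <= wdiff b a) s.

From mathcomp Require Import all_boot all_order all_algebra.
From mathcomp Require Import zify ring.
From Stdlib Require Import FunctionalExtensionality.
Import Order.TTheory GRing.Theory Num.Theory.
Local Open Scope ring_scope.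

(* We count such partitions by their number of parts m.  A partition with
   m+1 parts is its smallest part (a, i), written a = c+1+e with i = c+1,
   followed by a partition with m parts each of whose values has been
   increased by t = a + i + r; this decomposition is a bijection onto all
   triples (e, c, partition with m parts).  The weight changes by
   (m+1) e + (2m+1) c + K_m with K_m = 2m+1 + r m, so the generating series
   G_m of partitions with m parts satisfies
     (1 - q^(m+1)) (1 - q^(2m+1)) G_(m+1) = q^(K_m) G_m,
   whence (q;q)_m (q;q^2)_m G_m = q^(m^2 + r C(m,2)). *)

(** * Algebra of formal power series *)

Lemma fps_mulE f g n : fps_mul f g n = \sum_(k < n.+1) f k * g (n - k)%N.
Proof. by []. Qed.

(* The truncation of a series to degree n; products of series agree with
   products of truncations up to degree n, which transfers ring laws. *)
Definition trunc (f : fps) (n : nat) : {poly int} := \poly_(i < n.+1) f i.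

Lemma coef_trunc f n j : (j <= n)%N -> (trunc f n)`_j = f j.
Proof. by move=> jn; rewrite coef_poly ltnS jn. Qed.

Lemma fps_mul_trunc f g n j : (j <= n)%N -> fps_mul f g j = (trunc f n * trunc g n)`_j.
Proof.
move=> jn; rewrite coefM fps_mulE; apply: eq_bigr => k _.
by rewrite !coef_trunc //; have := ltn_ord k; lia.
Qed.

Lemma fps_mulC f g : fps_mul f g = fps_mul g f.
Proof.
apply: functional_extensionality => n.
by rewrite !(@fps_mul_trunc _ _ n n) // mulrC.
Qed.

Lemma fps_mulA f g h : fps_mul (fps_mul f g) h = fps_mul f (fps_mul g h).
Proof.
apply: functional_extensionality => n.
have -> : fps_mul (fps_mul f g) h n = (trunc f n * trunc g n * trunc h n)`_n.
  rewrite coefM; apply: eq_bigr => k _; have := ltn_ord k => kn.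
  by rewrite (@fps_mul_trunc f g n) ?coef_trunc //; lia.
have -> : fps_mul f (fps_mul g h) n = (trunc f n * (trunc g n * trunc h n))`_n.
  rewrite coefM; apply: eq_bigr => k _; have := ltn_ord k => kn.
  by rewrite (@fps_mul_trunc g h n) ?coef_trunc //; lia.
by rewrite mulrA.
Qed.

Lemma fps_mulCA f g h : fps_mul f (fps_mul g h) = fps_mul g (fps_mul f h).
Proof. by rewrite -fps_mulA (fps_mulC f g) fps_mulA. Qed.

Lemma fps_mulXE a h n :
  fps_mul (fps_X a) h n = if (a <= n)%N then h (n - a)%N else 0.
Proof.
rewrite fps_mulE.
under eq_bigr => k _ do rewrite /fps_X mulr_natl mulrb.
by rewrite -big_mkcond (big_ord1_eq _ (fun k => h (n - k)%N)) ltnS.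
Qed.

Lemma fps_mul1 h : fps_mul fps_one h = h.
Proof. by apply: functional_extensionality => n; rewrite (fps_mulXE 0) subn0. Qed.

Lemma fps_mulr1 h : fps_mul h fps_one = h.
Proof. by rewrite fps_mulC fps_mul1. Qed.

Lemma fps_mulBl f g h n :
  fps_mul (fps_sub f g) h n = fps_mul f h n - fps_mul g h n.
Proof. by rewrite !fps_mulE -sumrB; apply: eq_bigr => k _; rewrite mulrBl. Qed.

Lemma fps_XD a b : fps_mul (fps_X a) (fps_X b) = fps_X (a + b).
Proof.
apply: functional_extensionality => n; rewrite fps_mulXE /fps_X.
case: leqP => an; first by congr (_ %:R); apply/eqP/eqP; lia.
by rewrite (_ : (n == a + b)%N = false) //; apply/eqP; lia.
Qed.

Lemma fps_mul0 f g : fps_mul f g 0%N = f 0%N * g 0%N.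
Proof. by rewrite fps_mulE big_ord1. Qed.

Lemma fps_mulI f g h : f 0%N = 1 -> fps_mul f g = fps_mul f h -> g = h.
Proof.
move=> f0 E; apply: functional_extensionality => n; elim/ltn_ind: n => n IH.
have := congr1 (fun F => F n) E; rewrite !fps_mulE !big_ord_recl f0 !mul1r subn0.
rewrite (eq_bigr (fun i : 'I_n => f (lift ord0 i) * h (n - lift ord0 i)%N)) => [/addIr // | i _].
by rewrite IH //; have := ltn_ord i; rewrite /= /bump /=; lia.
Qed.

Lemma size_fps_inv_list f n : size (fps_inv_list f n) = n.+1.
Proof. by elim: n => //= n IH; rewrite size_rcons IH. Qed.

Lemma nth_fps_inv_list f n k :
  (k <= n)%N -> nth 0 (fps_inv_list f n) k = fps_inv f k.
Proof.
elim: n k => [|n IH] k kn; first by rewrite (_ : k = 0%N) //; lia.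
rewrite /= nth_rcons size_fps_inv_list; case: ltnP => kn'; first by apply: IH; lia.
rewrite (_ : k = n.+1); last by lia.
by rewrite eqxx /fps_inv /= nth_rcons size_fps_inv_list ltnn eqxx.
Qed.

Lemma fps_invS f n :
  fps_inv f n.+1 = - \sum_(k < n.+1) f k.+1 * fps_inv f (n - k)%N.
Proof.
rewrite {1}/fps_inv /= nth_rcons size_fps_inv_list ltnn eqxx; congr (- _).
by apply: eq_bigr => k _; rewrite nth_fps_inv_list // leq_subr.
Qed.

Lemma fps_mulV f : f 0%N = 1 -> fps_mul f (fps_inv f) = fps_one.
Proof.
move=> f0; apply: functional_extensionality => -[|n].
  by rewrite fps_mul0 f0 mul1r.
rewrite fps_mulE big_ord_recl f0 mul1r subn0 fps_invS.
by rewrite [X in _ + X](eq_bigr (fun k : 'I_n.+1 => f k.+1 * fps_inv f (n - k)%N)) ?addNr.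
Qed.

(* f / (1 - q^a), as the explicit sum  sum_c f_(N - a c). *)
Definition fps_geo (a : nat) (f : fps) : fps :=
  fun N => \sum_(0 <= c < N.+1 | (a * c <= N)%N) f (N - a * c)%N.

Lemma fps_geo_rec a f N : (0 < a)%N ->
  fps_geo a f N = f N + (if (a <= N)%N then fps_geo a f (N - a)%N else 0).
Proof.
move=> a0; rewrite /fps_geo big_mkcond big_nat_recl // muln0 subn0 leq0n.
congr (_ + _); case: leqP => aN; last first.
  by rewrite big1 // => i _; rewrite ifF // mulnS; lia.
rewrite [RHS]big_mkcond (@big_cat_nat _ _ _ (N - a).+1 0 N) //=; last by lia.
rewrite [X in _ + X]big_nat_cond [X in _ + X]big1 ?addr0; last first.
  move=> i /andP[/andP[Hi _] _]; rewrite ifF //.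
  by have := leq_pmull i a0; rewrite mulnS; lia.
apply: eq_bigr => i _.
by rewrite (_ : (a * i.+1 <= N)%N = (a * i <= N - a)%N) mulnS ?subnDA //; lia.
Qed.

Lemma fps_mul_geo a f : (0 < a)%N ->
  fps_mul (fps_sub fps_one (fps_X a)) (fps_geo a f) = f.
Proof.
move=> a0; apply: functional_extensionality => N.
rewrite fps_mulBl fps_mul1 fps_mulXE fps_geo_rec //.
by case: ifP => _; rewrite ?subr0 ?addrK.
Qed.

Lemma fps_prod_cat s t : fps_prod (s ++ t) = fps_mul (fps_prod s) (fps_prod t).
Proof. by elim: s => [|x s IH] /=; rewrite ?fps_mul1 // IH fps_mulA. Qed.

Lemma qpochS a d m :
  qpoch a d m.+1 = fps_mul (qpoch a d m) (fps_sub fps_one (fps_X (a + d * m))).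
Proof. by rewrite /qpoch -addn1 iotaD map_cat fps_prod_cat /= fps_mulr1. Qed.

Lemma qpoch_const a d m : (0 < a)%N -> qpoch a d m 0%N = 1.
Proof.
move=> a0; rewrite /qpoch; elim: (iota 0 m) => [|j s IH] //=.
rewrite fps_mul0 IH mulr1 /fps_sub /fps_one /fps_X.
by rewrite (_ : (0 == a + d * j)%N = false) //; apply/eqP; lia.
Qed.

Lemma size_flatten_map (T : Type) (F : nat -> seq T) (xs : seq nat) :
  (size (flatten (map F xs)))%:Z = \sum_(x <- xs) (size (F x))%:Z.
Proof. by elim: xs => [|x xs IH]; rewrite ?big_nil // big_cons size_cat PoszD IH. Qed.

Lemma uniq_flatten_tagged (T U : eqType) (xs : seq U) (F : U -> seq T) (g : T -> U) :
  uniq xs -> (forall x, x \in xs -> uniq (F x)) ->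
  (forall x y, x \in xs -> y \in F x -> g y = x) -> uniq (flatten (map F xs)).
Proof.
elim: xs => //= x xs IH /andP[nx uxs] uF gF.
have gF' z y : z \in xs -> y \in F z -> g y = z by move=> zs; apply: gF; rewrite inE zs orbT.
rewrite cat_uniq uF ?mem_head //= IH //; last by move=> z zs; apply: uF; rewrite inE zs orbT.
rewrite andbT; apply/hasPn => y /flattenP [_ /mapP [z zs ->]] yz; apply/negP => yx.
by move: nx; rewrite -(gF x y (mem_head _ _) yx) (gF' z y zs yz) zs.
Qed.

(** * Shifting all parts of a partition *)

Definition shift_part (t : nat) (p : nat * nat) : nat * nat := (p.1 + t, p.2)%N.
Definition unshift_part (t : nat) (p : nat * nat) : nat * nat := (p.1 - t, p.2)%N.

Lemma shift_part_inj t : injective (shift_part t).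
Proof. by case=> a b [c d] [] /addIn -> ->. Qed.

Lemma part_ok_shift t p : part_ok p -> part_ok (shift_part t p).
Proof. by rewrite /part_ok /= => /andP[h1 h2]; apply/andP; split => //; lia. Qed.

Lemma sorted_lexle_shift t s : sorted lexle (map (shift_part t) s) = sorted lexle s.
Proof.
rewrite sorted_map; case: s => //= x s; apply: eq_path => p q.
by rewrite /relpre /lexle /= ltn_add2r eqn_add2r.
Qed.

Lemma sorted_wdiff_shift (r : int) t s :
  sorted (fun a b => r <= wdiff b a) (map (shift_part t) s) =
  sorted (fun a b => r <= wdiff b a) s.
Proof.
rewrite sorted_map; case: s => //= x s; apply: eq_path => p q.
by rewrite /relpre /wdiff /= !PoszD; congr (_ <= _); ring.
Qed.

Lemma pweight_cons x s : pweight (x :: s) = (x.1 + pweight s)%N.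
Proof. by []. Qed.

Lemma pweight_shift t s : pweight (map (shift_part t) s) = (pweight s + size s * t)%N.
Proof. by elim: s => //= x s IH; rewrite /pweight /= in IH *; rewrite IH mulSn; lia. Qed.

(* Every part has value at least its copy index, hence at least 1. *)
Lemma size_le_pweight s : all part_ok s -> (size s <= pweight s)%N.
Proof.
elim: s => //= x s IH /andP[okx oks]; have := IH oks.
by move: okx; rewrite /part_ok /pweight /= => /andP[h1 h2]; lia.
Qed.

(** * Enumeration of partitions by number of parts *)

Section Enumeration.

Variable r : int.
Hypothesis r_ge : -1 <= r.

(* The shift applied to the remaining parts when (a, i) is the smallest part. *)
Definition gap (a i : nat) : nat := absz (a%:Z + i%:Z + r).

(* K_m = 2m+1 + r m: the weight added by a new smallest part when e = c = 0. *)
Definition step_exp (m : nat) : nat := absz ((2 * m + 1)%N%:Z + r * m%:Z).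

Lemma gapE a i : (0 < i)%N -> (gap a i)%:Z = a%:Z + i%:Z + r.
Proof. by move=> i0; rewrite /gap gez0_abs //; lia. Qed.

Lemma step_expE m : (step_exp m)%:Z = (2 * m + 1)%N%:Z + r * m%:Z.
Proof.
rewrite /step_exp gez0_abs //.
have : 0 <= (r + 1) * m%:Z by apply: mulr_ge0; lia.
lia.
Qed.

Definition attach (e c : nat) (s : seq (nat * nat)) : seq (nat * nat) :=
  (c.+1 + e, c.+1)%N :: map (shift_part (gap (c.+1 + e) c.+1)) s.

(* The weight of attach e c s, for s with m parts, minus that of s. *)
Lemma attach_weight m e c :
  (m.+1 * e + (2 * m + 1) * c + step_exp m = c.+1 + e + m * gap (c.+1 + e) c.+1)%N.
Proof.
apply/eqP; rewrite -(eqr_nat int) !natz.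
by rewrite !PoszD !PoszM step_expE gapE // !PoszD; apply/eqP; ring.
Qed.

Lemma valid_attach e c s : valid_part r s -> valid_part r (attach e c s).
Proof.
move=> /andP[/andP[ok so1] so2]; rewrite /valid_part /attach.
set t := gap (c.+1 + e) c.+1.
have tE : t%:Z = (c.+1 + e)%N%:Z + (c.+1)%:Z + r by rewrite gapE.
rewrite /= all_map; apply/andP; split; first (apply/andP; split).
- apply/andP; split; first by rewrite /part_ok /=; lia.
  by apply/allP => p ps; apply/part_ok_shift/(allP ok).
- case: s ok so1 {so2} => // y s /= /andP[oky _] so1.
  have := sorted_lexle_shift t (y :: s); rewrite /= so1 => -> ; rewrite andbT.
  by move: oky; rewrite /lexle /part_ok /= => /andP[h1 h2]; lia.
- case: s ok so2 {so1} => // y s /= /andP[oky _] so2.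
  have := sorted_wdiff_shift r t (y :: s); rewrite /= so2 => -> ; rewrite andbT.
  by move: oky; rewrite /wdiff /part_ok /= PoszD => /andP[h1 h2]; lia.
Qed.

(* In a valid partition with first part x, every later part y satisfies
   y.1 >= x.1 + x.2 + r + y.2, so the shift by gap x.1 x.2 can be undone. *)
Lemma later_parts_bound x s :
  path (fun a b => r <= wdiff b a) x s -> all part_ok s ->
  forall y, y \in s -> x.1%:Z + x.2%:Z + r + y.2%:Z <= y.1%:Z.
Proof.
elim: s x => // z s IH x /= /andP[Rxz Pzs] /andP[okz oks] y.
rewrite inE => /orP[/eqP -> | ys]; first by move: Rxz; rewrite /wdiff; lia.
have := IH z Pzs oks y ys; move: okz Rxz; rewrite /part_ok /wdiff => /andP[h1 h2].
by move: (z.1) (z.2) (x.1) (x.2) (y.1) (y.2) h1 h2 => z1 z2 x1 x2 y1 y2; lia.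
Qed.

(* One layer of the enumeration: all attach e c s with s drawn from the
   list P w of partitions with m parts and weight w, for the unique w that
   makes the total weight N. *)
Definition extend (m N : nat) (P : nat -> seq (seq (nat * nat))) : seq (seq (nat * nat)) :=
  flatten [seq flatten [seq
      (if (step_exp m <= N - m.+1 * e - (2 * m + 1) * c)%N
       then [seq attach e c s | s <- P (N - m.+1 * e - (2 * m + 1) * c - step_exp m)%N]
       else [::])
      | c <- iota 0 (N - m.+1 * e).+1 & ((2 * m + 1) * c <= N - m.+1 * e)%N]
     | e <- iota 0 N.+1 & (m.+1 * e <= N)%N].

Fixpoint enum_parts (m N : nat) : seq (seq (nat * nat)) :=
  if m is m'.+1 then extend m' N (enum_parts m')
  else if N == 0%N then [:: [::]] else [::].

Lemma enum_partsS m N : enum_parts m.+1 N = extend m N (enum_parts m).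
Proof. by []. Qed.

Lemma mem_enum_partsS m N s : (s \in enum_parts m.+1 N) <->
  exists e c s', [/\ s = attach e c s',
     s' \in enum_parts m (N - m.+1 * e - (2 * m + 1) * c - step_exp m)%N &
     (m.+1 * e + (2 * m + 1) * c + step_exp m <= N)%N].
Proof.
rewrite enum_partsS; split.
- move=> /flattenP [l /mapP [e]]; rewrite mem_filter mem_iota => /andP[g1 _] ->.
  move=> /flattenP [l' /mapP [c]]; rewrite mem_filter mem_iota => /andP[g2 _] ->.
  by case: ifP => // g3 /mapP [s' Hs' ->]; exists e, c, s'; split => //; lia.
- case=> e [c [s' [-> Hs' g]]].
  have he := leq_pmull e (ltn0Sn m).
  have hc : (c <= (2 * m + 1) * c)%N by apply: leq_pmull; lia.
  have me : e \in [seq e <- iota 0 N.+1 | (m.+1 * e <= N)%N].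
    by rewrite mem_filter mem_iota; apply/andP; split; lia.
  have mc : c \in [seq c <- iota 0 (N - m.+1 * e).+1 | ((2 * m + 1) * c <= N - m.+1 * e)%N].
    by rewrite mem_filter mem_iota; apply/andP; split; lia.
  apply/flattenP; eexists; first exact: (map_f _ me).
  apply/flattenP; eexists; first exact: (map_f _ mc).
  by rewrite ifT; [apply: map_f | lia].
Qed.

Lemma enum_parts_sound m N s : s \in enum_parts m N ->
  [/\ valid_part r s, pweight s = N & size s = m].
Proof.
elim: m N s => [|m IH] N s; first by rewrite /=; case: eqP => // ->; rewrite inE => /eqP ->.
move/mem_enum_partsS => [e [c [s' [-> /IH [v w sz] g]]]].
split; [exact: valid_attach | | by rewrite /= size_map sz].
by rewrite pweight_cons pweight_shift w sz /=; have := attach_weight m e c; lia.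
Qed.

(* Removing the smallest part of a valid partition and unshifting the rest
   gives a valid partition with one part fewer. *)
Lemma enum_parts_complete m s :
  size s = m -> valid_part r s -> s \in enum_parts m (pweight s).
Proof.
elim: m s => [|m IH] [|[a i] s0] //.
move=> [sz] /andP[/andP[/andP[oki oks] so1] so2]; move: oki; rewrite /part_ok /= => /andP[i0 ia].
set t := gap a i; have tE : t%:Z = a%:Z + i%:Z + r by rewrite gapE.
have hb := @later_parts_bound (a, i) s0 so2 oks.
set s' := map (unshift_part t) s0.
have shift_s' : map (shift_part t) s' = s0.
  rewrite -map_comp; apply: map_id_in => -[y1 y2] ys.
  by have := hb _ ys; rewrite /comp /shift_part /unshift_part /= => H; congr pair; lia.
have vs' : valid_part r s'.
  apply/andP; split; first (apply/andP; split).
  - rewrite /s' all_map; apply/allP => -[y1 y2] ys; have := hb _ ys.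
    by have := allP oks _ ys; rewrite /part_ok /= => /andP[h1 h2] H; apply/andP; split; lia.
  - by rewrite -(sorted_lexle_shift t) shift_s'; apply: path_sorted so1.
  - by rewrite -(sorted_wdiff_shift r t) shift_s'; apply: path_sorted so2.
have sz' : size s' = m by rewrite size_map.
have w := attach_weight m (a - i) i.-1.
rewrite prednK // subnKC // -/t in w.
have pw : pweight ((a, i) :: s0) = (a + pweight s' + m * t)%N.
  rewrite -shift_s' pweight_cons pweight_shift sz' /=; lia.
apply/mem_enum_partsS; exists (a - i)%N, i.-1, s'; split.
- by rewrite /attach prednK // subnKC // -/t shift_s'.
- by rewrite pw -!subnDA addnA w addnAC addKn; exact: IH.
- by rewrite pw; lia.
Qed.

(* The smallest part of attach e c s determines e and c, and attach e c is
   injective, so the enumeration has no repetitions. *)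
Lemma enum_parts_uniq m N : uniq (enum_parts m N).
Proof.
elim: m N => [|m IH] N; first by rewrite /=; case: (N == 0%N).
rewrite enum_partsS.
pose tag_e (s : seq (nat * nat)) := ((head (0, 0) s).1 - (head (0, 0) s).2)%N.
pose tag_c (s : seq (nat * nat)) := ((head (0, 0) s).2).-1.
apply: (@uniq_flatten_tagged _ _ _ _ tag_e); first by rewrite filter_uniq // iota_uniq.
- move=> e _; apply: (@uniq_flatten_tagged _ _ _ _ tag_c).
  + by rewrite filter_uniq // iota_uniq.
  + move=> c _; case: ifP => // _; rewrite map_inj_uniq //.
    by move=> s1 s2 [] /(inj_map (@shift_part_inj _)).
  + by move=> c y _; case: ifP => // _ /mapP [s _ ->].
- move=> e y _ /flattenP [l /mapP [c _ ->]].
  by case: ifP => // _ /mapP [s _ ->]; rewrite /tag_e /= addKn.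
Qed.

(* A partition has at most as many parts as its weight. *)
Lemma enum_parts_nil m N : (N < m)%N -> enum_parts m N = [::].
Proof.
case E: (enum_parts m N) => [|s l] // Nm.
have /enum_parts_sound [/andP[/andP[ok _] _] w sz] : s \in enum_parts m N by rewrite E mem_head.
by have := @size_le_pweight s ok; rewrite w sz; lia.
Qed.

(** * The generating series of partitions with m parts *)

Definition count_parts (m : nat) : fps := fun N => (size (enum_parts m N))%:Z.

Lemma count_parts0 : count_parts 0 = fps_one.
Proof. by apply: functional_extensionality => N; rewrite /count_parts /fps_one /=; case: (N == 0%N). Qed.

Lemma count_partsS m : count_parts m.+1 =
  fps_geo m.+1 (fps_geo (2 * m + 1) (fps_mul (fps_X (step_exp m)) (count_parts m))).
Proof.
apply: functional_extensionality => N.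
rewrite /count_parts enum_partsS size_flatten_map big_filter /fps_geo.
apply: eq_bigr => e _; rewrite size_flatten_map big_filter; apply: eq_bigr => c _.
by rewrite fps_mulXE; case: ifP => _ //; rewrite size_map.
Qed.

Fixpoint lead_exp (m : nat) : nat :=
  if m is m'.+1 then (lead_exp m' + step_exp m')%N else 0%N.

Lemma lead_expE m : expo r m = (lead_exp m)%:Z.
Proof.
elim: m => [|m IH]; first by rewrite /expo /= mulr0.
rewrite /= PoszD -IH step_expE /expo binS bin1.
rewrite (_ : (m.+1 ^ 2 = m ^ 2 + 2 * m + 1)%N); last by rewrite -addn1 sqrnD; lia.
by rewrite !PoszD !PoszM; ring.
Qed.

Definition denom (m : nat) : fps := fps_mul (qpoch 1 1 m) (qpoch 1 2 m).

Lemma denom_const m : denom m 0%N = 1.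
Proof. by rewrite /denom fps_mul0 !qpoch_const // mulr1. Qed.

Lemma denom_count_parts m : fps_mul (denom m) (count_parts m) = fps_X (lead_exp m).
Proof.
elim: m => [|m IH]; first by rewrite /denom /qpoch /= count_parts0 !fps_mul1.
have regroup a b c d x : fps_mul (fps_mul (fps_mul a b) (fps_mul c d)) x =
    fps_mul (fps_mul a c) (fps_mul d (fps_mul b x)).
  by rewrite !fps_mulA (fps_mulCA b c) (fps_mulCA b d).
rewrite /denom !qpochS count_partsS regroup mul1n !add1n addn1.
by rewrite !fps_mul_geo // fps_mulCA IH fps_XD addnC.
Qed.

Lemma count_parts_rhs m : count_parts m = rhs_term r m.
Proof.
apply: (@fps_mulI (denom m)); first exact: denom_const.
rewrite denom_count_parts /rhs_term fps_mulCA fps_mulV ?denom_const // fps_mulr1.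
by rewrite lead_expE absz_nat.
Qed.

Definition all_parts (N : nat) : seq (seq (nat * nat)) :=
  flatten [seq enum_parts m N | m <- iota 0 N.+1].

Lemma all_parts_uniq N : uniq (all_parts N).
Proof.
apply: (@uniq_flatten_tagged _ _ _ _ size); first exact: iota_uniq.
  by move=> m _; apply: enum_parts_uniq.
by move=> m y _ /enum_parts_sound [].
Qed.

Lemma mem_all_parts N s : (s \in all_parts N) = valid_part r s && (pweight s == N).
Proof.
apply/flattenP/andP => [[_ /mapP [m _ ->]] /enum_parts_sound [-> -> _] //|].
move=> [v /eqP <-]; exists (enum_parts (size s) (pweight s)); last exact: enum_parts_complete.
apply: (map_f (fun m => enum_parts m (pweight s))); rewrite mem_iota add0n ltnS.
by apply: size_le_pweight; case/andP: v => /andP[].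
Qed.

(* Counting by number of parts; the terms with m > N vanish. *)
Lemma size_all_parts N M : (N < M)%N -> (size (all_parts N))%:Z = \sum_(m < M) rhs_term r m N.
Proof.
move=> NM; rewrite size_flatten_map -(big_mkord xpredT (fun m => rhs_term r m N)).
rewrite (@big_cat_nat _ _ _ N.+1 0 M) //= [X in _ + X]big_nat_cond [X in _ + X]big1 ?addr0.
  by rewrite /index_iota subn0; apply: eq_bigr => m _; rewrite -count_parts_rhs.
by move=> m /andP[/andP[Nm _] _]; rewrite -count_parts_rhs /count_parts ?enum_parts_nil.
Qed.

End Enumeration.

Theorem corollary25 (r : int) : -1 <= r ->
  forall N : nat,
  exists L : seq (seq (nat * nat)),
    [/\ uniq L,
        (forall s, (s \in L) = valid_part r s && (pweight s == N)) &
        exists M : nat, forall M' : nat, (M <= M')%N ->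
          (size L)%:Z = \sum_(m < M') rhs_term r m N].
Proof.
move=> hr N; exists (all_parts r N); split.
- exact: all_parts_uniq.
- exact: mem_all_parts.
- by exists N.+1 => M' NM; apply: size_all_parts.
Qed.
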